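(* The class of minus-algebras with update is a finitely based variety (i.e. it is axiomatised by finitely many identities); hence so is the class of minus-semigroups with update.
   Context: A minus-algebra $(A,\circ,-)$ satisfies: $x\circ y=y-(y-x)$; $(A,\circ)$ is a right normal band (semigroup with $x\circ x=x$, $(x\circ y)\circ z=(y\circ x)\circ z$); there is an element $0$ with $x-x=0$ for all $x$; $x\circ0=0\circ x=0$; $(x-y)\circ x=x-y$; $(x-y)\circ y=0$; $(x-y)\circ z=(x\circ z)-y$; and the quasi-identity $s-x=t-x\ \&\ x\circ s=x\circ t\Rightarrow s=t$. A minus-algebra with update is a minus-algebra with a binary operation $\diamond$ satisfying $(x\diamond y)-x=x-(x\diamond y)=0$, $((x\diamond y)-y)\circ x=(x\diamond y)-y$ and $x\circ y=y\circ(x\diamond y)$. A minus-semigroup with update is a minus-algebra with update with an associative operation $\cdot$ (juxtaposition) satisfying $s(t-u)=st-su$. *)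

From Stdlib Require Import List.
Import ListNotations.

Inductive term (Op : Type) : Type :=
  | Var : nat -> term Op
  | App : Op -> term Op -> term Op -> term Op.
Arguments Var {Op} _.
Arguments App {Op} _ _ _.

Fixpoint eval {Op A : Type} (I : Op -> A -> A -> A) (v : nat -> A) (t : term Op) : A :=
  match t with
  | Var n => v n
  | App o t1 t2 => I o (eval I v t1) (eval I v t2)
  end.

Definition satisfies {Op A : Type} (I : Op -> A -> A -> A) (e : term Op * term Op) : Prop :=
  forall v : nat -> A, eval I v (fst e) = eval I v (snd e).

Definition finitely_based_variety (Op : Type)
  (K : forall A : Type, (Op -> A -> A -> A) -> Prop) : Prop :=
  exists E : list (term Op * term Op),
    forall (A : Type) (I : Op -> A -> A -> A), inhabited A ->
      (K A I <-> (forall e, In e E -> satisfies I e)).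

Section Defs.
Variable A : Type.

Definition minus_algebra_with_zero (circ minus : A -> A -> A) (z : A) : Prop :=
  (forall x y, circ x y = minus y (minus y x)) /\
  (forall x y w, circ (circ x y) w = circ x (circ y w)) /\
  (forall x, circ x x = x) /\
  (forall x y w, circ (circ x y) w = circ (circ y x) w) /\
  (forall x, minus x x = z) /\
  (forall x, circ x z = z /\ circ z x = z) /\
  (forall x y, circ (minus x y) x = minus x y) /\
  (forall x y, circ (minus x y) y = z) /\
  (forall x y w, circ (minus x y) w = minus (circ x w) y) /\
  (forall s t x, minus s x = minus t x -> circ x s = circ x t -> s = t).

Definition minus_algebra (circ minus : A -> A -> A) : Prop :=
  exists z, minus_algebra_with_zero circ minus z.

Definition minus_algebra_with_update (circ minus upd : A -> A -> A) : Prop :=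
  exists z, minus_algebra_with_zero circ minus z /\
    (forall x y, minus (upd x y) x = z /\ minus x (upd x y) = z) /\
    (forall x y, circ (minus (upd x y) y) x = minus (upd x y) y) /\
    (forall x y, circ x y = circ y (upd x y)).

Definition minus_semigroup_with_update (circ minus upd mul : A -> A -> A) : Prop :=
  minus_algebra_with_update circ minus upd /\
  (forall x y w, mul (mul x y) w = mul x (mul y w)) /\
  (forall s t u, mul s (minus t u) = minus (mul s t) (mul s u)).
End Defs.

Inductive opU : Type := UCirc | UMinus | UUpd.
Inductive opS : Type := SCirc | SMinus | SUpd | SMul.

Definition MAU_class : forall A : Type, (opU -> A -> A -> A) -> Prop :=
  fun A I => minus_algebra_with_update A (I UCirc) (I UMinus) (I UUpd).

Definition MSU_class : forall A : Type, (opS -> A -> A -> A) -> Prop :=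
  fun A I => minus_semigroup_with_update A (I SCirc) (I SMinus) (I SUpd) (I SMul).

From Stdlib Require Import List.
Import ListNotations.

(* The quasi-identity is the only axiom that is not an identity.  In the
   presence of update it can be traded for the identity
   (t ⋄ (s - x)) ⋄ (x ∘ s) = t ⋄ s.  The quasi-identity says that s is
   determined by its two parts s - x and x ∘ s; in particular x ⋄ v is the
   unique w with w - v = x - v and v ∘ w = x ∘ v, and both sides of the
   identity have the same parts relative to x.  Conversely, if s and t have
   the same parts relative to x then s - t = t - s = 0, so t ⋄ s = s, while
   the identity rewrites t ⋄ s into t ⋄ t = t.  With 0 written as x - x this
   gives finitely many identities; the two semigroup laws are identities
   already. *)

Section MinusAlgebra.
Variables (A : Type) (circ minus : A -> A -> A) (zero : A).
Local Infix "∘" := circ (at level 40, left associativity).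
Local Infix "⊖" := minus (at level 50, left associativity).

Hypothesis circE : forall x y, x ∘ y = y ⊖ (y ⊖ x).
Hypothesis circA : forall x y w, (x ∘ y) ∘ w = x ∘ (y ∘ w).
Hypothesis circxx : forall x, x ∘ x = x.
Hypothesis circ_rnormal : forall x y w, (x ∘ y) ∘ w = (y ∘ x) ∘ w.
Hypothesis subxx : forall x, x ⊖ x = zero.
Hypothesis circ0x : forall x, zero ∘ x = zero.
Hypothesis circ_sub_self : forall x y, (x ⊖ y) ∘ x = x ⊖ y.
Hypothesis circ_sub_subtrahend : forall x y, (x ⊖ y) ∘ y = zero.
Hypothesis circ_subl : forall x y w, (x ⊖ y) ∘ w = (x ∘ w) ⊖ y.

Lemma circCA x y w : x ∘ (y ∘ w) = y ∘ (x ∘ w).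
Proof. now rewrite <- !circA, circ_rnormal. Qed.

Lemma circC0 a b : a ∘ b = zero -> b ∘ a = zero.
Proof. intros Hab. now rewrite <- (circxx a), <- circA, circ_rnormal, Hab. Qed.

Lemma subr0 x : x ⊖ zero = x.
Proof. now rewrite <- (subxx x), <- circE, circxx. Qed.

Lemma sub_eq0 a b : a ⊖ b = zero <-> b ∘ a = a.
Proof.
  split; intros H.
  - now rewrite circE, H, subr0.
  - now rewrite <- H, <- circ_subl, subxx.
Qed.

Lemma sub_eq0_of_circ a b : a ∘ b = a -> a ⊖ b = zero.
Proof.
  intros H.
  rewrite <- (circ_sub_self a b). rewrite <- H at 2.
  now rewrite <- circA, circ_sub_self.
Qed.

Lemma sub_subl0 x y : (x ⊖ y) ⊖ x = zero.
Proof. apply sub_eq0_of_circ, circ_sub_self. Qed.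

Lemma sub0r x : zero ⊖ x = zero.
Proof. rewrite <- (subxx x) at 1. apply sub_subl0. Qed.

Lemma circ_sub x y : x ∘ (x ⊖ y) = x ⊖ y.
Proof. apply sub_eq0, sub_subl0. Qed.

Lemma sub_circl0 x y : (x ∘ y) ⊖ x = zero.
Proof. now rewrite <- circ_subl, subxx, circ0x. Qed.

Lemma sub_circr0 x y : (x ∘ y) ⊖ y = zero.
Proof. apply sub_eq0_of_circ. now rewrite circA, circxx. Qed.

Lemma sub_eq0_trans a b d : a ⊖ b = zero -> b ⊖ d = zero -> a ⊖ d = zero.
Proof. rewrite !sub_eq0. intros Hba Hdb. now rewrite <- Hba, <- circA, Hdb. Qed.

Lemma sub_eq0_circ a b d : a ⊖ b = zero -> a ⊖ d = zero -> a ⊖ (b ∘ d) = zero.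
Proof. rewrite !sub_eq0. intros Hba Hda. now rewrite circA, Hda. Qed.

Lemma circC_below a b s : a ∘ s = a -> b ∘ s = b -> a ∘ b = b ∘ a.
Proof.
  intros Ha Hb.
  now rewrite <- Hb at 1; rewrite <- circA, circ_rnormal, circA, Ha.
Qed.

Lemma subAC s t x : (s ⊖ t) ⊖ x = (s ⊖ x) ⊖ t.
Proof.
  rewrite <- (circ_sub s t) at 1. rewrite <- (circ_sub s x).
  rewrite <- !circ_subl.
  apply (circC_below _ _ s); apply circ_sub_self.
Qed.

Lemma sub_idem a b : (a ⊖ b) ⊖ b = a ⊖ b.
Proof. rewrite <- (circ_sub a b) at 1. now rewrite <- circ_subl, circxx. Qed.

Lemma eq_of_sub_eq0 p q w :
  p ∘ w = p -> q ∘ w = q -> p ⊖ q = zero -> q ⊖ p = zero -> p = q.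
Proof.
  intros Hp Hq Hpq Hqp. apply sub_eq0 in Hpq, Hqp.
  now rewrite <- Hpq, (circC_below _ _ w Hq Hp).
Qed.

Lemma sub_eq0_subr a b d : a ⊖ b = zero -> (a ⊖ d) ⊖ (b ⊖ d) = zero.
Proof.
  intros Hab. apply sub_eq0. rewrite circ_subl.
  assert (Hb : b ∘ (a ⊖ d) = a ⊖ d) by (apply sub_eq0; now rewrite subAC, Hab, sub0r).
  now rewrite Hb, sub_idem.
Qed.

Lemma circ_subr x s t : x ∘ (s ⊖ t) = (x ∘ s) ⊖ t.
Proof.
  apply (eq_of_sub_eq0 _ _ s).
  - now rewrite circA, circ_sub_self.
  - now rewrite circ_subl, circA, circxx.
  - apply sub_eq0. rewrite circ_subl.
    assert (Hxs : (x ∘ s) ∘ (x ∘ (s ⊖ t)) = x ∘ (s ⊖ t)).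
    { now rewrite circA, (circCA s x), <- (circA x x), circxx, circ_sub. }
    assert (Ht : (x ∘ (s ⊖ t)) ⊖ t = x ∘ (s ⊖ t)).
    { now rewrite (circE x), subAC, sub_idem. }
    now rewrite Hxs, Ht.
  - apply sub_eq0_circ.
    + now rewrite subAC, sub_circl0, sub0r.
    + apply sub_eq0_subr, sub_circr0.
Qed.

Lemma sub_eq0_of_same_parts s t x :
  s ⊖ x = t ⊖ x -> x ∘ s = x ∘ t -> s ⊖ t = zero.
Proof.
  intros Hsub Hcirc.
  assert (Hx : x ∘ (s ⊖ t) = s ⊖ t) by (apply sub_eq0; now rewrite subAC, Hsub, sub_subl0).
  rewrite <- Hx, <- (circ_sub_self s t) at 1.
  rewrite <- circA, circ_rnormal, circA, Hcirc, <- circA, circ_rnormal, Hx.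
  apply circ_sub_subtrahend.
Qed.

Section Update.
Variable upd : A -> A -> A.
Local Infix "⋄" := upd (at level 45, left associativity).

Hypothesis upd_sub0 : forall x y, (x ⋄ y) ⊖ x = zero.
Hypothesis sub_upd0 : forall x y, x ⊖ (x ⋄ y) = zero.
Hypothesis circ_upd_sub : forall x y, ((x ⋄ y) ⊖ y) ∘ x = (x ⋄ y) ⊖ y.
Hypothesis circ_upd : forall x y, x ∘ y = y ∘ (x ⋄ y).

Lemma upd_subr x y : (x ⋄ y) ⊖ y = x ⊖ y.
Proof.
  apply (eq_of_sub_eq0 _ _ x).
  - apply circ_upd_sub.
  - apply circ_sub_self.
  - apply sub_eq0_subr, upd_sub0.
  - apply sub_eq0_subr, sub_upd0.
Qed.

Lemma updxx x : x ⋄ x = x.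
Proof.
  rewrite <- (circxx x) at 3. rewrite circ_upd.
  symmetry. apply sub_eq0, upd_sub0.
Qed.

Lemma upd_circl x y w : (x ⋄ y) ∘ w = x ∘ w.
Proof.
  rewrite <- (proj1 (sub_eq0 _ _) (sub_upd0 x y)) at 2.
  now rewrite circ_rnormal, (proj1 (sub_eq0 _ _) (upd_sub0 x y)).
Qed.

Section QuasiIdentity.
Hypothesis quasi_identity : forall s t x, s ⊖ x = t ⊖ x -> x ∘ s = x ∘ t -> s = t.

Lemma upd_unique w x v : w ⊖ v = x ⊖ v -> v ∘ w = x ∘ v -> w = x ⋄ v.
Proof.
  intros Hsub Hcirc. apply (quasi_identity _ _ v).
  - now rewrite upd_subr.
  - now rewrite <- circ_upd.
Qed.

Lemma upd_disjoint x v : x ∘ v = zero -> x ⋄ v = x.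
Proof. intros H. symmetry. apply upd_unique; [reflexivity | now rewrite H; apply circC0]. Qed.

Lemma upd_subl x v w : (x ⋄ v) ⊖ w = (x ⊖ w) ⋄ v.
Proof.
  apply upd_unique.
  - now rewrite subAC, upd_subr, subAC.
  - now rewrite circ_subr, <- circ_upd, circ_subl.
Qed.

Lemma circ_updr w x v : w ∘ (x ⋄ v) = (w ∘ x) ⋄ v.
Proof.
  apply upd_unique.
  - now rewrite <- !circ_subr, upd_subr.
  - now rewrite circCA, <- circ_upd, circA.
Qed.

Lemma upd_restrict x v : x ⋄ v = x ⋄ (x ∘ v).
Proof.
  apply upd_unique.
  - rewrite upd_subl. apply upd_disjoint. now rewrite circ_subl, subxx.
  - now rewrite circA, <- circ_upd.
Qed.

Lemma upd_congr x v v' : x ∘ v = x ∘ v' -> x ⋄ v = x ⋄ v'.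
Proof. intros H. now rewrite upd_restrict, H, <- upd_restrict. Qed.

Theorem upd_split t s x : (t ⋄ (s ⊖ x)) ⋄ (x ∘ s) = t ⋄ s.
Proof.
  apply (quasi_identity _ _ x).
  - rewrite !upd_subl, upd_disjoint.
    + apply upd_congr. now rewrite circ_subr, <- circ_subl, sub_idem.
    + now rewrite <- circA, upd_circl, circ_sub_subtrahend, circ0x.
  - rewrite !circ_updr, (upd_disjoint (x ∘ t)).
    + apply upd_congr. now rewrite !circA, (circCA t x), <- (circA x x), circxx.
    + now rewrite circ_subr, circA, sub_circl0.
Qed.
End QuasiIdentity.

Theorem quasi_identity_of_upd_split :
  (forall t s x, (t ⋄ (s ⊖ x)) ⋄ (x ∘ s) = t ⋄ s) ->
  forall s t x, s ⊖ x = t ⊖ x -> x ∘ s = x ∘ t -> s = t.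
Proof.
  intros Hsplit s t x Hsub Hcirc.
  assert (Hst := sub_eq0_of_same_parts s t x Hsub Hcirc).
  assert (Hts := sub_eq0_of_same_parts t s x (eq_sym Hsub) (eq_sym Hcirc)).
  assert (Hs : t ⋄ s = s).
  { rewrite <- (proj1 (sub_eq0 _ _) Hst) at 2.
    rewrite circ_upd. symmetry. apply sub_eq0.
    now apply (sub_eq0_trans _ t). }
  now rewrite <- Hs, <- (Hsplit t s x), Hsub, Hcirc, Hsplit, updxx.
Qed.
End Update.
End MinusAlgebra.

Definition env3 {A : Type} (x y w : A) : nat -> A :=
  fun n => match n with 0 => x | 1 => y | _ => w end.

Section Identities.
Context {A : Type} (circ minus upd mul : A -> A -> A).
Local Infix "∘" := circ (at level 40, left associativity).
Local Infix "⊖" := minus (at level 50, left associativity).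
Local Infix "⋄" := upd (at level 45, left associativity).
Local Infix "·" := mul (at level 40, left associativity).

Definition update_identities : Prop :=
  (forall x y, x ∘ y = y ⊖ (y ⊖ x)) /\
  (forall x y w, (x ∘ y) ∘ w = x ∘ (y ∘ w)) /\
  (forall x, x ∘ x = x) /\
  (forall x y w, (x ∘ y) ∘ w = (y ∘ x) ∘ w) /\
  (forall x y, x ⊖ x = y ⊖ y) /\
  (forall x y, x ∘ (y ⊖ y) = y ⊖ y) /\
  (forall x y, (y ⊖ y) ∘ x = y ⊖ y) /\
  (forall x y, (x ⊖ y) ∘ x = x ⊖ y) /\
  (forall x y, (x ⊖ y) ∘ y = x ⊖ x) /\
  (forall x y w, (x ⊖ y) ∘ w = (x ∘ w) ⊖ y) /\
  (forall x y, (x ⋄ y) ⊖ x = x ⊖ x) /\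
  (forall x y, x ⊖ (x ⋄ y) = x ⊖ x) /\
  (forall x y, ((x ⋄ y) ⊖ y) ∘ x = (x ⋄ y) ⊖ y) /\
  (forall x y, x ∘ y = y ∘ (x ⋄ y)) /\
  (forall x y w, (x ⋄ (y ⊖ w)) ⋄ (w ∘ y) = x ⋄ y).

Definition semigroup_identities : Prop :=
  (forall x y w, (x · y) · w = x · (y · w)) /\
  (forall x y w, x · (y ⊖ w) = (x · y) ⊖ (x · w)).
End Identities.

Section TermIdentities.
Context {Op : Type} (oc om ou omul : Op).
Local Notation x := (Var 0).
Local Notation y := (Var 1).
Local Notation w := (Var 2).
Local Infix "∘" := (App oc) (at level 40, left associativity).
Local Infix "⊖" := (App om) (at level 50, left associativity).
Local Infix "⋄" := (App ou) (at level 45, left associativity).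
Local Infix "·" := (App omul) (at level 40, left associativity).

Definition update_axioms : list (term Op * term Op) :=
  [ (x ∘ y, y ⊖ (y ⊖ x));
    ((x ∘ y) ∘ w, x ∘ (y ∘ w));
    (x ∘ x, x);
    ((x ∘ y) ∘ w, (y ∘ x) ∘ w);
    (x ⊖ x, y ⊖ y);
    (x ∘ (y ⊖ y), y ⊖ y);
    ((y ⊖ y) ∘ x, y ⊖ y);
    ((x ⊖ y) ∘ x, x ⊖ y);
    ((x ⊖ y) ∘ y, x ⊖ x);
    ((x ⊖ y) ∘ w, (x ∘ w) ⊖ y);
    ((x ⋄ y) ⊖ x, x ⊖ x);
    (x ⊖ (x ⋄ y), x ⊖ x);
    (((x ⋄ y) ⊖ y) ∘ x, (x ⋄ y) ⊖ y);
    (x ∘ y, y ∘ (x ⋄ y));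
    ((x ⋄ (y ⊖ w)) ⋄ (w ∘ y), x ⋄ y) ].

Definition semigroup_axioms : list (term Op * term Op) :=
  [ ((x · y) · w, x · (y · w));
    (x · (y ⊖ w), (x · y) ⊖ (x · w)) ].
End TermIdentities.

Section Interpretation.
Context {Op A : Type} (I : Op -> A -> A -> A) (oc om ou omul : Op).

Lemma Forall_satisfies_update_axioms :
  Forall (satisfies I) (update_axioms oc om ou) <-> update_identities (I oc) (I om) (I ou).
Proof.
  unfold update_axioms. rewrite !Forall_cons_iff, Forall_nil_iff.
  split.
  - intros (e1 & e2 & e3 & e4 & e5 & e6 & e7 & e8 & e9 & e10 & e11 & e12 & e13 & e14 & e15 & _).
    repeat split.
    + exact (fun x y => e1 (env3 x y x)).
    + exact (fun x y w => e2 (env3 x y w)).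
    + exact (fun x => e3 (env3 x x x)).
    + exact (fun x y w => e4 (env3 x y w)).
    + exact (fun x y => e5 (env3 x y x)).
    + exact (fun x y => e6 (env3 x y x)).
    + exact (fun x y => e7 (env3 x y x)).
    + exact (fun x y => e8 (env3 x y x)).
    + exact (fun x y => e9 (env3 x y x)).
    + exact (fun x y w => e10 (env3 x y w)).
    + exact (fun x y => e11 (env3 x y x)).
    + exact (fun x y => e12 (env3 x y x)).
    + exact (fun x y => e13 (env3 x y x)).
    + exact (fun x y => e14 (env3 x y x)).
    + exact (fun x y w => e15 (env3 x y w)).
  - intros H. repeat split; intro v; cbn; apply H.
Qed.

Lemma Forall_satisfies_semigroup_axioms :
  Forall (satisfies I) (semigroup_axioms om omul) <-> semigroup_identities (I om) (I omul).
Proof.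
  unfold semigroup_axioms. rewrite !Forall_cons_iff, Forall_nil_iff.
  split.
  - intros (e1 & e2 & _).
    split; [exact (fun x y w => e1 (env3 x y w)) | exact (fun x y w => e2 (env3 x y w))].
  - intros H. repeat split; intro v; cbn; apply H.
Qed.
End Interpretation.

Lemma minus_algebra_with_update_iff (A : Type) (circ minus upd : A -> A -> A) :
  inhabited A ->
  minus_algebra_with_update A circ minus upd <-> update_identities circ minus upd.
Proof.
  intros [a]. split.
  - intros (zero & (circE & circA & circxx & circ_rnormal & subxx & circ0 & circ_sub_self
                    & circ_sub_subtrahend & circ_subl & quasi_identity)
            & upd_sub & circ_upd_sub & circ_upd).
    assert (circ0x : forall x, circ zero x = zero) by (intro x; apply circ0).
    assert (circx0 : forall x, circ x zero = zero) by (intro x; apply circ0).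
    assert (upd_sub0 : forall x y, minus (upd x y) x = zero) by (intros x y; apply upd_sub).
    assert (sub_upd0 : forall x y, minus x (upd x y) = zero) by (intros x y; apply upd_sub).
    assert (Hsplit := upd_split A circ minus zero circE circA circxx circ_rnormal subxx circ0x
                        circ_sub_self circ_sub_subtrahend circ_subl upd upd_sub0 sub_upd0
                        circ_upd_sub circ_upd quasi_identity).
    repeat split; intros; rewrite ?subxx; auto.
  - intros (circE & circA & circxx & circ_rnormal & subxx & circx0 & circ0x & circ_sub_self
            & circ_sub_subtrahend & circ_subl & upd_sub0 & sub_upd0 & circ_upd_sub & circ_upd
            & Hsplit).
    set (zero := minus a a).
    assert (subxx' : forall x, minus x x = zero) by (intro x; apply subxx).
    assert (circx0' : forall x, circ x zero = zero) by (intro x; apply circx0).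
    assert (circ0x' : forall x, circ zero x = zero) by (intro x; apply circ0x).
    assert (circ_sub_subtrahend' : forall x y, circ (minus x y) y = zero)
      by (intros x y; rewrite circ_sub_subtrahend; apply subxx).
    assert (upd_sub0' : forall x y, minus (upd x y) x = zero)
      by (intros x y; rewrite upd_sub0; apply subxx).
    assert (sub_upd0' : forall x y, minus x (upd x y) = zero)
      by (intros x y; rewrite sub_upd0; apply subxx).
    assert (quasi_identity := quasi_identity_of_upd_split A circ minus zero circE circA circxx
                                circ_rnormal subxx' circ0x' circ_sub_self circ_sub_subtrahend'
                                circ_subl upd upd_sub0' circ_upd Hsplit).
    exists zero. repeat split; intros; eauto.
Qed.

Theorem proposition5p7 :
  finitely_based_variety opU MAU_class /\ finitely_based_variety opS MSU_class.
Proof.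
  split.
  - exists (update_axioms UCirc UMinus UUpd). intros A I HA.
    rewrite <- Forall_forall, Forall_satisfies_update_axioms.
    exact (minus_algebra_with_update_iff A _ _ _ HA).
  - exists (update_axioms SCirc SMinus SUpd ++ semigroup_axioms SMinus SMul). intros A I HA.
    rewrite <- Forall_forall, Forall_app, Forall_satisfies_update_axioms,
      Forall_satisfies_semigroup_axioms, <- (minus_algebra_with_update_iff A _ _ _ HA).
    reflexivity.
Qed.
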